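(* Let $k_s>0$ and $c_\sigma>0$ with $c_\sigma\neq 1$, and let $\eta$ be a random variable on $(0,\infty)$ with probability density $$f_\eta(\eta)=e^{-k_s^2}\,(1+k_s^2)\,c_\sigma\; e^{\frac{\eta k_s^2}{\eta+c_\sigma}}\;\frac{\eta+\frac{c_\sigma}{1+k_s^2}}{(\eta+c_\sigma)^3},\qquad \eta>0 .$$ Then the average channel capacity per unit bandwidth $\bar C_{h,u}=\mathbb{E}[\log_2(1+\eta)]=\int_0^\infty \log_2(1+\eta)f_\eta(\eta)\,d\eta$ equals $$\bar C_{h,u}=\frac{1}{\log 2}\left(\log\!\left(c_\sigma k_s^2\right)+E_1(k_s^2)+\zeta+\frac{e^{-\frac{c_\sigma k_s^2}{c_\sigma-1}}}{c_\sigma-1}\left(\mathrm{Ei}\!\left(\frac{c_\sigma k_s^2}{c_\sigma-1}\right)-\mathrm{Ei}\!\left(\frac{k_s^2}{c_\sigma-1}\right)\right)\right),$$ where $E_1(x)=\int_x^\infty \frac{e^{-t}}{t}\,dt$ for $x>0$, $\mathrm{Ei}(x)=-\,\mathrm{PV}\!\int_{-x}^{\infty}\frac{e^{-t}}{t}\,dt$ is the standard (principal value) exponential integral, $\zeta\approx 0.577$ is the Euler–Mascheroni constant, and $\log$ is the natural logarithm.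
   Context: Setting: a user $UE0$ is served by two cooperating antenna arrays with zero-forcing position-based joint transmit precoding over Rician channels with factor $K$; its SINR is $\eta=|x_s|^2/|x_I|^2$ with $x_s$ the signal component and $x_I$ the interference-plus-noise component. For fixed channel statistics and fixed user/interferer locations, the paper approximates $x_s$ by a complex Gaussian $\mathcal{CN}(\mu_s,\sigma_s^2)$ and $x_I$ by an independent $\mathcal{CN}(0,\sigma_I^2)$ (moment matching of Gaussian mixtures), which yields the density of $\eta$ displayed in the claim, with $k_s=|\mu_s|/\sigma_s$ (ratio of the absolute mean signal amplitude to its standard deviation) and $c_\sigma=\sigma_s^2/\sigma_I^2$ (ratio of signal variance to interference-plus-noise variance). The average channel capacity per unit bandwidth is $\mathbb{E}[\log_2(1+\eta)]$ under this density. *)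

From Stdlib Require Import Reals.
From Coquelicot Require Import Coquelicot.
Open Scope R_scope.

Definition expint_integrand (t : R) : R := exp (- t) / t.

Definition ExpInt_E1 (x : R) : R :=
  RInt_gen expint_integrand (at_point x) (Rbar_locally p_infty).

(* Integral of e^{-t}/t over [a, +oo) minus the open hole (-eps, eps), eps > 0. *)
Definition pv_piece (a eps : R) : R :=
  if Rle_dec eps a then
    RInt_gen expint_integrand (at_point a) (Rbar_locally p_infty)
  else if Rle_dec a (- eps) then
    RInt expint_integrand a (- eps)
    + RInt_gen expint_integrand (at_point eps) (Rbar_locally p_infty)
  else
    RInt_gen expint_integrand (at_point eps) (Rbar_locally p_infty).

(* ExpInt_Ei(x) = - PV int_{-x}^oo e^{-t}/t dt, the principal value being
   lim_{eps -> 0+} of pv_piece (-x) eps (written as a two-sided punctured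
   limit of eps |-> pv_piece (-x) |eps|, which is the same limit). *)
Definition ExpInt_Ei (x : R) : R :=
  - real (Lim (fun eps => pv_piece (- x) (Rabs eps)) 0).

Definition euler_gamma : R :=
  real (Lim_seq (fun n => sum_f_R0 (fun k => / INR (S k)) n - ln (INR (S n)))).

Definition log2 (x : R) : R := ln x / ln 2.

Definition f_eta (ks cs eta : R) : R :=
  exp (- ks ^ 2) * (1 + ks ^ 2) * cs * exp (eta * ks ^ 2 / (eta + cs))
  * (eta + cs / (1 + ks ^ 2)) / (eta + cs) ^ 3.

From Stdlib Require Import Reals Lra Lia.
From Coquelicot Require Import Coquelicot.
Open Scope R_scope.

(* With a = ks^2 and c = cs, eta has distribution function F(x) = x/(x+c) e^(-ac/(x+c)).
   Integrating log2(1+x) by parts against F leaves (1 - F(x))/(1+x), which has an explicit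
   primitive built from logarithms and the entire function Ein z = int_0^z (1 - e^(-t))/t dt;
   the capacity is the difference of the limits of this primitive at +oo and at 0.
   To compare with the statement, E_1 and Ei are expressed through Ein: ln|t| - Ein t is a
   primitive of e^(-t)/t on both half-lines, so E_1(x) = -gamma - (ln x - Ein x) and
   Ei(x) = gamma + ln|x| - Ein(-x), once one knows that ln x - Ein x tends to -gamma. That
   limit comes from 0 <= H_N - Ein N <= 1/N, obtained by comparing (1 - t/N)^N with e^(-t)
   inside H_N = int_0^N (1 - (1 - t/N)^N)/t dt. *)

Lemma is_derive_nonneg_le (f df : R -> R) (a b : R) : a <= b ->
  (forall x, a <= x <= b -> is_derive f x (df x)) ->
  (forall x, a <= x <= b -> 0 <= df x) -> f a <= f b.
Proof.
  intros Hab Hd Hpos.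
  destruct (MVT_gen f a b df) as [c [Hc Hfc]].
  - intros x Hx. rewrite Rmin_left, Rmax_right in Hx by lra. apply Hd; lra.
  - intros x Hx. rewrite Rmin_left, Rmax_right in Hx by lra.
    apply continuity_pt_filterlim, (@ex_derive_continuous R_AbsRing R_NormedModule).
    exists (df x). apply Hd; lra.
  - rewrite Rmin_left, Rmax_right in Hc by lra.
    assert (0 <= df c * (b - a)) by (apply Rmult_le_pos; [apply Hpos|]; lra).
    lra.
Qed.

Lemma is_RInt_gen_derive {Fa Fb : (R -> Prop) -> Prop} {FFa : Filter Fa} {FFb : Filter Fb}
  (f F : R -> R) (la lb : R) :
  filter_prod Fa Fb (fun ab => forall x, Rmin (fst ab) (snd ab) <= x <= Rmax (fst ab) (snd ab) ->
    is_derive F x (f x) /\ continuous f x) ->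
  filterlim F Fa (locally la) -> filterlim F Fb (locally lb) ->
  is_RInt_gen f Fa Fb (lb - la).
Proof.
  intros HF Ha Hb.
  apply filterlimi_lim_ext_loc with (f := fun ab => plus (F (snd ab)) (opp (F (fst ab)))).
  - apply filter_imp with (2 := HF). intros [a b] Hab.
    apply (is_RInt_derive F f a b); intros; apply Hab; auto.
  - apply (filterlim_comp_2 (G := locally lb) (H := locally (opp la))
             (fun ab => F (snd ab)) (fun ab => opp (F (fst ab))) plus).
    + apply filterlim_comp with (2 := Hb). apply filterlim_snd.
    + apply filterlim_comp with (G := locally la).
      * apply filterlim_comp with (2 := Ha). apply filterlim_fst.
      * apply (@filterlim_opp R_AbsRing R_NormedModule la).
    + apply (filterlim_plus lb (opp la)).
Qed.

Lemma nondecreasing_is_lim_pinfty (f : R -> R) (l : R) :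
  (forall x y, 0 < x -> x <= y -> f x <= f y) ->
  is_lim_seq (fun n => f (INR (S n))) l ->
  filterlim f (Rbar_locally p_infty) (locally l).
Proof.
  intros Hf Hl.
  assert (Hle : forall n, f (INR (S n)) <= l).
  { apply is_lim_seq_incr_compare; [exact Hl|].
    intros n. apply Hf; [apply lt_0_INR; lia | apply le_INR; lia]. }
  apply filterlim_locally. intros eps.
  destruct (Hl (ball l eps) (locally_ball l eps)) as [N HN].
  exists (INR (S N)). intros y Hy.
  destruct (INR_unbounded y) as [m Hm].
  assert (Hlow : f (INR (S N)) <= f y) by (apply Hf; [apply lt_0_INR; lia | lra]).
  assert (Hup : f y <= f (INR (S m))).
  { apply Hf; [|rewrite S_INR; lra]. apply Rlt_trans with (INR (S N)); [apply lt_0_INR; lia | lra]. }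
  specialize (HN N (Nat.le_refl N)). specialize (Hle m).
  change (Rabs (f (INR (S N)) - l) < eps) in HN. change (Rabs (f y - l) < eps).
  rewrite Rabs_left1 in HN |- *; lra.
Qed.

Lemma pow_ge_bernoulli (y : R) (m : nat) : -1 <= y -> 1 + INR m * y <= (1 + y) ^ m.
Proof.
  intros Hy. induction m as [|m IH]; [simpl; lra|].
  rewrite S_INR, <- tech_pow_Rmult. assert (0 <= INR m) by apply pos_INR. nra.
Qed.

Definition exprel (x : R) : R := if Req_EM_T x 0 then 1 else (exp x - 1) / x.

Lemma exprel_0 : exprel 0 = 1.
Proof. unfold exprel. destruct (Req_EM_T 0 0); [reflexivity | contradiction]. Qed.

Lemma exprel_nz (x : R) : x <> 0 -> exprel x = (exp x - 1) / x.
Proof. intros Hx. unfold exprel. destruct (Req_EM_T x 0); [contradiction | reflexivity]. Qed.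

Lemma mul_exprel (x : R) : x * exprel x = exp x - 1.
Proof.
  destruct (Req_dec x 0) as [->|Hx].
  - rewrite exprel_0, exp_0. ring.
  - rewrite exprel_nz by exact Hx. field. exact Hx.
Qed.

Lemma continuous_exprel (x : R) : continuous exprel x.
Proof.
  destruct (Req_dec x 0) as [->|Hx].
  - apply continuity_pt_filterlim. intros eps Heps.
    destruct (derivable_pt_lim_exp_0 eps Heps) as [d Hd].
    exists d. split; [apply cond_pos|]. intros y [_ Hy]. simpl in Hy |- *.
    unfold R_dist in Hy |- *. rewrite Rminus_0_r in Hy. rewrite exprel_0.
    destruct (Req_dec y 0) as [->|Hy0].
    + rewrite exprel_0, Rminus_diag, Rabs_R0. exact Heps.
    + rewrite exprel_nz by exact Hy0.
      specialize (Hd y Hy0 Hy). rewrite Rplus_0_l, exp_0 in Hd. exact Hd.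
  - apply continuous_ext_loc with (g := fun y => (exp y - 1) / y).
    + assert (Hr : 0 < Rabs x) by (apply Rabs_pos_lt; exact Hx).
      exists (mkposreal _ Hr). intros y Hy. symmetry. apply exprel_nz.
      intros ->. change (Rabs (0 - x) < Rabs x) in Hy.
      rewrite Rminus_0_l, Rabs_Ropp in Hy. lra.
    + apply (@ex_derive_continuous R_AbsRing R_NormedModule). auto_derive. exact Hx.
Qed.

Definition Ein (x : R) : R := RInt (fun t => exprel (- t)) 0 x.

Lemma is_derive_Ein (x : R) : is_derive Ein x (exprel (- x)).
Proof.
  assert (Hc : forall t, continuous (fun t => exprel (- t)) t).
  { intros t. apply continuous_comp; [|apply continuous_exprel].
    apply (@ex_derive_continuous R_AbsRing R_NormedModule). auto_derive. exact I. }
  apply (is_derive_RInt (fun t => exprel (- t)) Ein 0 x); [|apply Hc].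
  apply filter_forall. intros b. apply (@RInt_correct R_CompleteNormedModule).
  apply ex_RInt_continuous. intros t _. apply Hc.
Qed.

Lemma Derive_Ein (x : R) : Derive Ein x = exprel (- x).
Proof. apply is_derive_unique, is_derive_Ein. Qed.

Lemma ex_derive_Ein (x : R) : ex_derive Ein x.
Proof. exists (exprel (- x)). apply is_derive_Ein. Qed.

Lemma Ein_0 : Ein 0 = 0.
Proof. unfold Ein. rewrite RInt_point. reflexivity. Qed.

Lemma pow_le_exp (y : R) (n : nat) :
  0 <= 1 + y / INR (S n) -> (1 + y / INR (S n)) ^ S n <= exp y.
Proof.
  intros Hy.
  assert (HN : 0 < INR (S n)) by (apply lt_0_INR; lia).
  replace (exp y) with (exp (y / INR (S n)) ^ S n).
  - apply pow_incr. split; [exact Hy | apply exp_ineq1_le].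
  - rewrite <- Rpower_pow by apply exp_pos. unfold Rpower. rewrite ln_exp.
    f_equal. field. lra.
Qed.

Lemma exp_neg_sub_pow_bounds (t : R) (n : nat) : 0 < t <= INR (S n) ->
  0 <= exp (- t) - (1 - t / INR (S n)) ^ S n <= t ^ 2 * exp (- t) / INR (S n).
Proof.
  set (N := INR (S n)). intros Ht.
  assert (HN : 0 < N) by (apply lt_0_INR; lia).
  assert (HtN : 0 <= t / N <= 1).
  { split; [apply Rmult_le_pos; [lra | left; apply Rinv_0_lt_compat; lra]|].
    apply Rmult_le_reg_r with N; [lra|]. unfold Rdiv. rewrite Rmult_assoc, Rinv_l; lra. }
  assert (Hlow : (1 - t / N) ^ S n <= exp (- t)).
  { replace (1 - t / N) with (1 + - t / N) by (unfold Rdiv; ring). apply pow_le_exp.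
    fold N. unfold Rdiv in *. lra. }
  (* Bernoulli for (1 - (t/N)^2)^N, together with (1 + t/N)^N <= e^t. *)
  assert (Hsq : 1 - t ^ 2 / N <= (1 + t / N) ^ S n * (1 - t / N) ^ S n).
  { rewrite <- Rpow_mult_distr.
    replace ((1 + t / N) * (1 - t / N)) with (1 + - (t / N) ^ 2) by ring.
    replace (1 - t ^ 2 / N) with (1 + INR (S n) * - (t / N) ^ 2) by (fold N; field; lra).
    apply pow_ge_bernoulli. assert ((t / N) ^ 2 <= 1) by (simpl; nra). lra. }
  assert (Hexp : (1 + t / N) ^ S n <= exp t) by (apply pow_le_exp; fold N; lra).
  assert (Hpow : 0 <= (1 - t / N) ^ S n) by (apply pow_le; lra).
  assert (Hinv : exp (- t) * exp t = 1) by (rewrite <- exp_plus, Rplus_opp_l; apply exp_0).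
  assert (Hpos : 0 < exp (- t)) by apply exp_pos.
  assert (Hup : exp (- t) * (1 - t ^ 2 / N) <= (1 - t / N) ^ S n).
  { replace ((1 - t / N) ^ S n) with (exp (- t) * (exp t * (1 - t / N) ^ S n))
      by (rewrite <- Rmult_assoc, Hinv; ring).
    apply Rmult_le_compat_l; nra. }
  split; [lra|].
  replace (t ^ 2 * exp (- t) / N) with (exp (- t) - exp (- t) * (1 - t ^ 2 / N)) by (field; lra).
  lra.
Qed.

Lemma is_derive_sum_pow_succ_div (m : nat) (s : R) :
  is_derive (fun s => sum_f_R0 (fun j => s ^ S j / INR (S j)) m) s (sum_f_R0 (fun j => s ^ j) m).
Proof.
  induction m as [|m IH].
  - simpl. auto_derive; [exact I | field].
  - simpl sum_f_R0 at 2.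
    apply (is_derive_plus (fun s => sum_f_R0 (fun j => s ^ S j / INR (S j)) m)
                          (fun s => s ^ S (S m) / INR (S (S m)))); [exact IH|].
    assert (0 < INR (S m)) by (apply lt_0_INR; lia).
    auto_derive; [exact I|].
    change (match m with 0%nat => 1 | S _ => INR m + 1 end) with (INR (S m)).
    field. lra.
Qed.

Definition harmonic (n : nat) : R := sum_f_R0 (fun k => / INR (S k)) n.

Section HarmonicGap.

Variable n : nat.

Let N : R := INR (S n).

Let N_pos : 0 < N.
Proof. apply lt_0_INR. lia. Qed.

(* H_N - Ein N = int_0^N (e^(-t) - (1 - t/N)^N)/t dt: [gap'] is this integrand and [gap]
   its primitive vanishing at 0. *)
Let gap (t : R) : R :=
  harmonic n - sum_f_R0 (fun j => (1 - t / N) ^ S j / INR (S j)) n - Ein t.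

Let gap' (t : R) : R := if Req_EM_T t 0 then 0 else (exp (- t) - (1 - t / N) ^ S n) / t.

Let is_derive_gap (t : R) : is_derive gap t (gap' t).
Proof.
  assert (Hs : is_derive (fun t => sum_f_R0 (fun j => (1 - t / N) ^ S j / INR (S j)) n) t
                 (- / N * sum_f_R0 (fun j => (1 - t / N) ^ j) n)).
  { apply (is_derive_comp (fun s => sum_f_R0 (fun j => s ^ S j / INR (S j)) n) (fun t => 1 - t / N)).
    - apply is_derive_sum_pow_succ_div.
    - auto_derive; [exact I | field; lra]. }
  pose proof (is_derive_minus _ _ t _ _ (is_derive_minus _ _ t _ _ (is_derive_const (harmonic n) t) Hs)
                (is_derive_Ein t)) as Hd.
  replace (gap' t) with (0 - (- / N * sum_f_R0 (fun j => (1 - t / N) ^ j) n) - exprel (- t)).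
  - exact Hd.
  - unfold gap'. destruct (Req_EM_T t 0) as [->|Ht].
    + replace (1 - 0 / N) with 1 by (field; lra).
      rewrite (sum_eq _ (fun _ => 1)) by (intros; apply pow1).
      rewrite sum_cte, Ropp_0, exprel_0. fold N. field. lra.
    + assert (HtN : t / N <> 0).
      { apply Rmult_integral_contrapositive_currified; [exact Ht | apply Rinv_neq_0_compat; lra]. }
      rewrite tech3, exprel_nz by lra. field. lra.
Qed.

Let gap_0 : gap 0 = 0.
Proof.
  unfold gap. rewrite Ein_0. replace (1 - 0 / N) with 1 by (field; lra).
  rewrite (sum_eq _ (fun k => / INR (S k))); [unfold harmonic; ring|].
  intros k _. rewrite pow1. apply Rmult_1_l.
Qed.

Let gap_N : gap N = harmonic n - Ein N.
Proof.
  unfold gap. replace (1 - N / N) with 0 by (field; lra).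
  rewrite (sum_eq _ (fun _ => 0)), sum_cte; [ring|].
  intros k _. simpl. unfold Rdiv. ring.
Qed.

Let gap'_bounds (t : R) : 0 <= t <= N -> 0 <= gap' t <= t * exp (- t) / N.
Proof.
  intros Ht. unfold gap'. destruct (Req_EM_T t 0) as [->|Ht0].
  - unfold Rdiv. rewrite !Rmult_0_l. lra.
  - destruct (exp_neg_sub_pow_bounds t n) as [Hlow Hup]; [fold N; lra|]. fold N in Hlow, Hup.
    split; [apply Rdiv_le_0_compat; lra|].
    apply Rmult_le_reg_r with t; [lra|].
    replace (t * exp (- t) / N * t) with (t ^ 2 * exp (- t) / N) by (field; lra).
    replace ((exp (- t) - (1 - t / N) ^ S n) / t * t) with (exp (- t) - (1 - t / N) ^ S n)
      by (field; lra).
    exact Hup.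
Qed.

Lemma harmonic_sub_Ein_bounds : 0 <= harmonic n - Ein N <= / N.
Proof.
  rewrite <- gap_N. split.
  - rewrite <- gap_0. apply (is_derive_nonneg_le gap gap'); [lra | intros; apply is_derive_gap|].
    intros t Ht. apply gap'_bounds, Ht.
  - set (bound := fun t => - (1 + t) * exp (- t) / N).
    assert (Hmono : bound 0 - gap 0 <= bound N - gap N).
    { apply (is_derive_nonneg_le (fun t => bound t - gap t) (fun t => t * exp (- t) / N - gap' t)).
      - lra.
      - intros t _. apply (is_derive_minus bound gap); [|apply is_derive_gap].
        unfold bound. auto_derive; [exact I | field; lra].
      - intros t Ht. apply gap'_bounds in Ht. lra. }
    unfold bound in Hmono. rewrite gap_0, Ropp_0, exp_0 in Hmono.
    assert (0 < (1 + N) * exp (- N) / N)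
      by (apply Rdiv_lt_0_compat; [apply Rmult_lt_0_compat, exp_pos|]; lra).
    unfold Rdiv in *. lra.
Qed.

End HarmonicGap.

Definition expint_antideriv (t : R) : R := ln (Rabs t) - Ein t.

Lemma is_derive_expint_antideriv (t : R) :
  t <> 0 -> is_derive expint_antideriv t (expint_integrand t).
Proof.
  intros Ht. unfold expint_antideriv, expint_integrand. auto_derive.
  - repeat split; [exact Ht | apply Rabs_pos_lt, Ht | apply ex_derive_Ein].
  - rewrite Derive_Ein, exprel_nz by lra.
    destruct (Rlt_or_le t 0) as [Hneg|Hpos].
    + rewrite sign_eq_m1, Rabs_left by exact Hneg. field. exact Ht.
    + rewrite sign_eq_1, Rabs_right by lra. field. exact Ht.
Qed.

Lemma continuous_expint_integrand (t : R) : t <> 0 -> continuous expint_integrand t.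
Proof.
  intros Ht. apply (@ex_derive_continuous R_AbsRing R_NormedModule).
  unfold expint_integrand. auto_derive. exact Ht.
Qed.

Lemma expint_antideriv_le (x y : R) : 0 < x -> x <= y -> expint_antideriv x <= expint_antideriv y.
Proof.
  intros Hx Hxy. apply (is_derive_nonneg_le _ expint_integrand); [exact Hxy | |].
  - intros t Ht. apply is_derive_expint_antideriv. lra.
  - intros t Ht. left. apply Rdiv_lt_0_compat; [apply exp_pos | lra].
Qed.

Lemma expint_antideriv_le_1 (y : R) : 1 <= y -> expint_antideriv y <= expint_antideriv 1 + 1.
Proof.
  intros Hy.
  (* e^(-t)/t <= e^(-t) on [1, y] *)
  assert (H : - exp (- 1) - expint_antideriv 1 <= - exp (- y) - expint_antideriv y).
  { apply (is_derive_nonneg_le (fun t => - exp (- t) - expint_antideriv t)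
             (fun t => exp (- t) - expint_integrand t)); [exact Hy | |].
    - intros t Ht. apply (is_derive_minus (fun t => - exp (- t))).
      + auto_derive; [exact I | ring].
      + apply is_derive_expint_antideriv. lra.
    - intros t Ht. unfold expint_integrand. assert (Hexp := exp_pos (- t)).
      enough (exp (- t) / t <= exp (- t)) by lra.
      apply Rmult_le_reg_r with t; [lra|]. unfold Rdiv. rewrite Rmult_assoc, Rinv_l by lra. nra. }
  assert (0 < exp (- y)) by apply exp_pos.
  assert (exp (- 1) < 1) by (rewrite <- exp_0; apply exp_increasing; lra).
  lra.
Qed.

Lemma is_lim_seq_expint_antideriv :
  is_lim_seq (fun n => expint_antideriv (INR (S n))) (- euler_gamma).
Proof.
  set (u := fun n => expint_antideriv (INR (S n))).
  assert (HN : forall n, 0 < INR (S n)) by (intros; apply lt_0_INR; lia).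
  destruct (growing_cv u) as [l Hl].
  - intros n. apply expint_antideriv_le; [apply HN | rewrite (S_INR (S n)); lra].
  - exists (expint_antideriv 1 + 1). intros z [n ->]. apply expint_antideriv_le_1.
    rewrite S_INR. assert (0 <= INR n) by apply pos_INR. lra.
  - apply is_lim_seq_Reals in Hl.
    enough (Hg : euler_gamma = - l) by (rewrite Hg, Ropp_involutive; exact Hl).
    assert (Hs : is_lim_seq (fun n => sum_f_R0 (fun k => / INR (S k)) n - ln (INR (S n))) (0 - l)).
    { apply is_lim_seq_ext with (fun n => (harmonic n - Ein (INR (S n))) - u n).
      { intros n. unfold u, expint_antideriv, harmonic. rewrite Rabs_pos_eq by (left; apply HN). ring. }
      apply is_lim_seq_minus'; [|exact Hl].
      apply is_lim_seq_le_le with (u := fun _ => 0) (w := fun n => / INR (S n)).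
      - intros n. apply harmonic_sub_Ein_bounds.
      - apply is_lim_seq_const.
      - apply (is_lim_seq_inv _ p_infty); [|discriminate].
        apply (is_lim_seq_incr_1 INR). apply is_lim_seq_INR. }
    unfold euler_gamma. rewrite (is_lim_seq_unique _ _ Hs). simpl. ring.
Qed.

Lemma is_lim_expint_antideriv_pinfty :
  filterlim expint_antideriv (Rbar_locally p_infty) (locally (- euler_gamma)).
Proof.
  apply nondecreasing_is_lim_pinfty; [apply expint_antideriv_le | apply is_lim_seq_expint_antideriv].
Qed.

Lemma is_RInt_gen_expint_integrand_pinfty (x : R) : 0 < x ->
  is_RInt_gen expint_integrand (at_point x) (Rbar_locally p_infty) (- euler_gamma - expint_antideriv x).
Proof.
  intros Hx. apply (is_RInt_gen_derive _ expint_antideriv).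
  - exists (fun a => a = x) (fun b => x < b); [reflexivity | exists x; auto|].
    intros a b -> Hb t. simpl. rewrite Rmin_left, Rmax_right by lra. intros Ht.
    split; [apply is_derive_expint_antideriv | apply continuous_expint_integrand]; lra.
  - intros P HP. apply (locally_singleton _ _ HP).
  - apply is_lim_expint_antideriv_pinfty.
Qed.

Lemma ExpInt_E1_eq (x : R) : 0 < x -> ExpInt_E1 x = - euler_gamma - expint_antideriv x.
Proof. intros Hx. apply is_RInt_gen_unique, is_RInt_gen_expint_integrand_pinfty, Hx. Qed.

Lemma RInt_expint_integrand_neg (a b : R) : a < 0 -> b < 0 ->
  RInt expint_integrand a b = expint_antideriv b - expint_antideriv a.
Proof.
  intros Ha Hb. apply is_RInt_unique, (is_RInt_derive expint_antideriv); intros t Ht;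
    assert (t < 0) by (destruct (Rle_dec a b);
      [rewrite Rmax_right in Ht | rewrite Rmax_left in Ht]; lra).
  - apply is_derive_expint_antideriv. lra.
  - apply continuous_expint_integrand. lra.
Qed.

Lemma pv_piece_pos (a eps : R) : 0 < eps <= a ->
  pv_piece a eps = - euler_gamma - expint_antideriv a.
Proof.
  intros Heps. unfold pv_piece. destruct (Rle_dec eps a); [|lra].
  apply ExpInt_E1_eq. lra.
Qed.

Lemma pv_piece_neg (a eps : R) : 0 < eps <= - a ->
  pv_piece a eps = Ein eps - Ein (- eps) - euler_gamma - expint_antideriv a.
Proof.
  intros Heps. unfold pv_piece.
  destruct (Rle_dec eps a); [lra|]. destruct (Rle_dec a (- eps)); [|lra].
  change (RInt_gen expint_integrand (at_point eps) (Rbar_locally p_infty)) with (ExpInt_E1 eps).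
  rewrite RInt_expint_integrand_neg, ExpInt_E1_eq by lra.
  unfold expint_antideriv. rewrite Rabs_Ropp, Rabs_pos_eq by lra. ring.
Qed.

Lemma ExpInt_Ei_eq (x : R) : x <> 0 -> ExpInt_Ei x = euler_gamma + expint_antideriv (- x).
Proof.
  intros Hx. unfold ExpInt_Ei.
  enough (Hl : is_lim (fun eps => pv_piece (- x) (Rabs eps)) 0
                 (- euler_gamma - expint_antideriv (- x))).
  { rewrite (is_lim_unique _ _ _ Hl). simpl. ring. }
  assert (Hr : 0 < Rabs x) by (apply Rabs_pos_lt, Hx).
  assert (Hnear : forall P : R -> Prop, (forall eps, 0 < eps <= Rabs x -> P eps) ->
                    Rbar_locally' 0 (fun y => P (Rabs y))).
  { intros P HP. exists (mkposreal _ Hr). intros y Hy Hy0. apply HP. split.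
    - apply Rabs_pos_lt, Hy0.
    - change (Rabs (y - 0) < Rabs x) in Hy. rewrite Rminus_0_r in Hy. lra. }
  destruct (Rlt_or_le x 0) as [Hneg|Hpos].
  - apply is_lim_ext_loc with (fun _ => - euler_gamma - expint_antideriv (- x)); [|apply is_lim_const].
    apply (Hnear (fun e => _ = pv_piece (- x) e)). intros eps Heps. symmetry. apply pv_piece_pos.
    rewrite Rabs_left in Heps; lra.
  - apply is_lim_ext_loc
      with (fun eps => Ein (Rabs eps) - Ein (- Rabs eps) - euler_gamma - expint_antideriv (- x)).
    { apply (Hnear (fun e => Ein e - Ein (- e) - _ - _ = pv_piece (- x) e)).
      intros eps Heps. symmetry. apply pv_piece_neg.
      rewrite Rabs_pos_eq in Heps; lra. }
    replace (- euler_gamma - expint_antideriv (- x))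
      with (Ein (Rabs 0) - Ein (- Rabs 0) - euler_gamma - expint_antideriv (- x))
      by (rewrite Rabs_R0, Ropp_0, Ein_0; ring).
    apply (is_lim_continuity
             (fun eps => Ein (Rabs eps) - Ein (- Rabs eps) - euler_gamma - expint_antideriv (- x))).
    apply continuity_pt_filterlim.
    apply (continuous_comp Rabs (fun u => Ein u - Ein (- u) - euler_gamma - expint_antideriv (- x)));
      [apply continuous_Rabs|].
    apply (@ex_derive_continuous R_AbsRing R_NormedModule).
    auto_derive. repeat split; apply ex_derive_Ein.
Qed.

Lemma ln2_pos : 0 < ln 2.
Proof. rewrite <- ln_1. apply ln_increasing; lra. Qed.

(* The first term is -(1 - F(x)) ln(1+x), the others a primitive of (1 - F(x))/(1+x). *)
Definition capacity_antideriv (a c x : R) : R :=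
  (- (1 - x / (x + c) * exp (- (a * c / (x + c)))) * ln (1 + x)
   - Ein (a * c / (x + c)) + ln (c * (1 + x) / (x + c))
   + exp (- (c * a / (c - 1))) / (c - 1)
     * (ln (c * (1 + x) / (x + c)) - Ein (- (a / (c - 1) * (c * (1 + x) / (x + c)))))) / ln 2.

Lemma is_derive_capacity_antideriv (ks cs x : R) : 0 < ks -> 0 < cs -> cs <> 1 -> 0 <= x ->
  is_derive (capacity_antideriv (ks ^ 2) cs) x (log2 (1 + x) * f_eta ks cs x).
Proof.
  intros Hks Hcs Hcs1 Hx. unfold capacity_antideriv, f_eta, log2.
  assert (Ha : 0 < ks ^ 2) by (apply pow_lt, Hks).
  set (a := ks ^ 2) in *.
  assert (Hxc : 0 < x + cs) by lra.
  assert (Hq : 0 < cs * (1 + x) / (x + cs)) by (apply Rdiv_lt_0_compat; nra).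
  assert (Hc1 : cs - 1 <> 0) by lra.
  auto_derive.
  - repeat split; try lra; apply ex_derive_Ein.
  - rewrite !Derive_Ein, !Ropp_involutive.
    assert (Hy : 0 < a * cs * / (x + cs)) by (apply Rdiv_lt_0_compat; nra).
    assert (Hz : a / (cs - 1) * (cs * (1 + x) * / (x + cs)) <> 0).
    { apply Rmult_integral_contrapositive_currified; [|lra].
      apply Rmult_integral_contrapositive_currified; [lra | apply Rinv_neq_0_compat, Hc1]. }
    rewrite exprel_nz, (exprel_nz (a / _ * _)) by lra.
    replace (exp (a / (cs - 1) * (cs * (1 + x) * / (x + cs))))
      with (exp (cs * a / (cs - 1)) * exp (- (a * cs * / (x + cs))))
      by (rewrite <- exp_plus; f_equal; field; lra).
    replace (exp (x * a / (x + cs))) with (exp a * exp (- (a * cs * / (x + cs))))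
      by (rewrite <- exp_plus; f_equal; field; lra).
    rewrite !exp_Ropp.
    assert (Hea := exp_pos a). assert (Heb := exp_pos (cs * a / (cs - 1))).
    assert (Hey := exp_pos (a * cs * / (x + cs))). assert (Hln := ln2_pos).
    field. repeat split; lra.
Qed.

Lemma capacity_antideriv_0 (a c : R) : 0 < c ->
  capacity_antideriv a c 0
  = (- Ein a - exp (- (c * a / (c - 1))) / (c - 1) * Ein (- (a / (c - 1)))) / ln 2.
Proof.
  intros Hc. unfold capacity_antideriv.
  replace (0 / (0 + c)) with 0 by (field; lra).
  replace (a * c / (0 + c)) with a by (field; lra).
  replace (c * (1 + 0) / (0 + c)) with 1 by (field; lra).
  rewrite Rplus_0_r, ln_1, Rmult_1_r. unfold Rdiv. ring.
Qed.

Lemma is_lim_inv_shift (c : R) : is_lim (fun x => / (x + c)) p_infty 0.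
Proof.
  apply (is_lim_inv _ _ p_infty); [|discriminate].
  eapply is_lim_plus; [apply is_lim_id | apply is_lim_const | constructor].
Qed.

Lemma is_lim_ln_succ_div (c : R) : is_lim (fun x => ln (1 + x) / (x + c)) p_infty 0.
Proof.
  apply is_lim_ext_loc with (fun x => ln (1 + x) / (1 + x) * (1 + (1 - c) * / (x + c))).
  - exists (Rmax 0 (- c)). intros x Hx.
    assert (H0 := Rmax_l 0 (- c)). assert (Hc := Rmax_r 0 (- c)).
    field. split; lra.
  - replace (Finite 0) with (Rbar_mult 0 (1 + (1 - c) * 0)) by (simpl; f_equal; ring).
    apply is_lim_mult; [| |simpl; exact I].
    + apply (is_lim_comp (fun y => ln y / y) (fun x => 1 + x) p_infty 0 p_infty).
      * apply is_lim_div_ln_p.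
      * eapply is_lim_plus; [apply is_lim_const | apply is_lim_id | constructor].
      * exists 0. intros x _. discriminate.
    + apply is_lim_plus'; [apply is_lim_const|].
      apply (is_lim_scal_l _ (1 - c) p_infty 0). apply is_lim_inv_shift.
Qed.

Lemma is_lim_capacity_antideriv (a c : R) : 0 < c -> c <> 1 ->
  is_lim (capacity_antideriv a c) p_infty
    ((ln c + exp (- (c * a / (c - 1))) / (c - 1) * (ln c - Ein (- (c * a / (c - 1))))) / ln 2).
Proof.
  intros Hc Hc1.
  set (w := fun x => / (x + c)).
  (* 1 - F(x) = c w (a exprel(-acw) + e^(-acw)) with w = 1/(x+c): the factor w tames ln(1+x). *)
  set (Phi := fun w => - c * (a * exprel (- (a * c * w)) + exp (- (a * c * w)))).
  set (Psi := fun w => - Ein (a * c * w) + ln (c * (1 - (c - 1) * w))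
    + exp (- (c * a / (c - 1))) / (c - 1)
      * (ln (c * (1 - (c - 1) * w)) - Ein (- (a / (c - 1) * (c * (1 - (c - 1) * w)))))).
  apply is_lim_ext_loc with (fun x => (Phi (w x) * (ln (1 + x) / (x + c)) + Psi (w x)) / ln 2).
  - exists 0. intros x Hx. unfold capacity_antideriv, Phi, Psi, w.
    replace (c * (1 - (c - 1) * / (x + c))) with (c * (1 + x) / (x + c)) by (field; lra).
    assert (He := mul_exprel (- (a * c * / (x + c)))).
    unfold Rdiv. replace (exp (- (a * c * / (x + c))))
      with (1 - a * c * / (x + c) * exprel (- (a * c * / (x + c)))) by lra.
    field. repeat split; [apply Rgt_not_eq, ln2_pos | lra | lra].
  - assert (Hw : filterlim w (Rbar_locally p_infty) (locally 0)) by apply is_lim_inv_shift.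
    assert (HPhi : continuous Phi 0).
    { apply (continuous_comp (fun w => - (a * c * w)) (fun y => - c * (a * exprel y + exp y))).
      - apply (@ex_derive_continuous R_AbsRing R_NormedModule). auto_derive. exact I.
      - apply (continuous_mult (fun _ => - c) (fun y => a * exprel y + exp y));
          [apply continuous_const|].
        apply (continuous_plus (fun y => a * exprel y) exp); [|apply continuous_exp].
        apply (continuous_mult (fun _ => a) exprel);
          [apply continuous_const | apply continuous_exprel]. }
    assert (HPsi : continuous Psi 0).
    { apply (@ex_derive_continuous R_AbsRing R_NormedModule). unfold Psi. auto_derive.
      repeat split; try apply ex_derive_Ein; lra. }
    replace (Finite ((ln c + exp (- (c * a / (c - 1))) / (c - 1) * (ln c - Ein (- (c * a / (c - 1)))))
                     / ln 2))
      with (Rbar_mult (Phi 0 * 0 + Psi 0) (/ ln 2)).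
    + apply is_lim_scal_r, is_lim_plus'.
      * apply (is_lim_mult (fun x => Phi (w x)) _ p_infty (Phi 0) 0);
          [| apply is_lim_ln_succ_div | exact I].
        exact (filterlim_comp _ _ _ w Phi _ _ _ Hw HPhi).
      * exact (filterlim_comp _ _ _ w Psi _ _ _ Hw HPsi).
    + unfold Psi. simpl. f_equal. rewrite !Rmult_0_r, Ein_0.
      rewrite Rminus_0_r, Rmult_1_r, Ropp_0, !Rplus_0_l.
      replace (a / (c - 1) * c) with (c * a / (c - 1)) by (field; lra).
      reflexivity.
Qed.

Lemma continuous_capacity_integrand (ks cs x : R) : 0 < cs -> 0 < x ->
  continuous (fun eta => log2 (1 + eta) * f_eta ks cs eta) x.
Proof.
  intros Hcs Hx. apply (@ex_derive_continuous R_AbsRing R_NormedModule).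
  assert (Hxc : 0 < x + cs) by lra.
  unfold log2, f_eta. auto_derive.
  repeat split; try lra. apply Rgt_not_eq. repeat apply Rmult_lt_0_compat; lra.
Qed.

Lemma capacity_closed_form_eq (a c : R) : 0 < a -> 0 < c -> c <> 1 ->
  / ln 2 *
  (ln (c * a) + ExpInt_E1 a + euler_gamma
   + exp (- (c * a / (c - 1))) / (c - 1) * (ExpInt_Ei (c * a / (c - 1)) - ExpInt_Ei (a / (c - 1))))
  = (ln c + exp (- (c * a / (c - 1))) / (c - 1) * (ln c - Ein (- (c * a / (c - 1))))) / ln 2
    - capacity_antideriv a c 0.
Proof.
  intros Ha Hc Hc1.
  assert (Hd : a / (c - 1) <> 0).
  { apply Rmult_integral_contrapositive_currified; [lra | apply Rinv_neq_0_compat; lra]. }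
  assert (Hb : c * a / (c - 1) = c * (a / (c - 1))) by (unfold Rdiv; ring).
  assert (Hb0 : c * a / (c - 1) <> 0)
    by (rewrite Hb; apply Rmult_integral_contrapositive_currified; lra).
  rewrite ExpInt_E1_eq, (ExpInt_Ei_eq _ Hb0), (ExpInt_Ei_eq _ Hd), capacity_antideriv_0 by lra.
  unfold expint_antideriv.
  assert (Hln : ln (Rabs (- (c * a / (c - 1)))) = ln c + ln (Rabs (- (a / (c - 1))))).
  { rewrite Hb, !Rabs_Ropp, Rabs_mult, (Rabs_pos_eq c) by lra.
    apply ln_mult; [lra | apply Rabs_pos_lt, Hd]. }
  rewrite Hln, Rabs_pos_eq, ln_mult by lra.
  field. split; [lra | apply Rgt_not_eq, ln2_pos].
Qed.

Theorem theorem1 (ks cs : R) (hks : 0 < ks) (hcs : 0 < cs) (hcs1 : cs <> 1) :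
  is_RInt_gen (fun eta => log2 (1 + eta) * f_eta ks cs eta)
    (at_right 0) (Rbar_locally p_infty)
    (/ ln 2 *
     (ln (cs * ks ^ 2) + ExpInt_E1 (ks ^ 2) + euler_gamma
      + exp (- (cs * ks ^ 2 / (cs - 1))) / (cs - 1)
        * (ExpInt_Ei (cs * ks ^ 2 / (cs - 1)) - ExpInt_Ei (ks ^ 2 / (cs - 1))))).
Proof.
  rewrite capacity_closed_form_eq by (try apply pow_lt; lra).
  apply (is_RInt_gen_derive _ (capacity_antideriv (ks ^ 2) cs)).
  - exists (fun x => 0 < x) (fun y => 0 < y).
    + exists (mkposreal 1 Rlt_0_1). intros y _ Hy. exact Hy.
    + exists 0. auto.
    + intros x y Hx Hy t [Ht _]. simpl in Ht.
      assert (0 < t) by (apply Rlt_le_trans with (2 := Ht), Rmin_pos; assumption).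
      split; [apply is_derive_capacity_antideriv | apply continuous_capacity_integrand]; lra.
  - apply (filterlim_filter_le_1 (F := locally 0)); [apply filter_le_within|].
    apply (@ex_derive_continuous R_AbsRing R_NormedModule).
    eexists. apply is_derive_capacity_antideriv; lra.
  - apply is_lim_capacity_antideriv; assumption.
Qed.
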